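(* Let $w,v\in\Sigma^*$ and $k\in\mathbb{N}$ with $w\equiv_k v$. Consider a play of the $k$-round Ehrenfeucht–Fraïssé game on $\mathfrak{A}_w$ and $\mathfrak{A}_v$ in which Duplicator follows a winning strategy, and let $a_r$ and $b_r$ be the elements of $\mathfrak{A}_w$ and $\mathfrak{A}_v$, respectively, chosen in round $r$. If for some $r\in\{1,\dots,k\}$ either $a_r\in\mathsf{Facs}(w)$ and $r+|a_r|-1<k$, or $b_r\in\mathsf{Facs}(v)$ and $r+|b_r|-1<k$, then $a_r=b_r$.
   Context: $\Sigma$ is a fixed finite alphabet. For $w \in \Sigma^*$, $\mathsf{Facs}(w)$ is the set of all factors (contiguous subwords, including $\varepsilon$ and $w$) of $w$; $|u|$ is the length of $u$. The structure $\mathfrak{A}_w$ representing $w$ has universe $\mathsf{Facs}(w)\cup\{\perp\}$, a ternary relation $R_\circ=\{(x,y,z)\in\mathsf{Facs}(w)^3 : x=y\cdot z\}$, for each letter $\mathtt{a}\in\Sigma$ a constant interpreted as $\mathtt{a}$ if $\mathtt{a}$ occurs in $w$ and as $\perp$ otherwise, and a constant $\varepsilon$ interpreted as the empty word. The $k$-round Ehrenfeucht–Fraïssé game on $\mathfrak{A}_w,\mathfrak{A}_v$: in each round $i$, Spoiler picks one of the two structures and an element of its universe, Duplicator answers with an element of the other structure's universe; let $a_i$ (in $\mathfrak{A}_w$) and $b_i$ (in $\mathfrak{A}_v$) be the chosen elements. Duplicator wins if the tuples $(a_1,\dots,a_k,\vec c^{\,\mathfrak{A}_w})$ and $(b_1,\dots,b_k,\vec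 c^{\,\mathfrak{A}_v})$, where $\vec c$ lists the interpretations of all constants, form a partial isomorphism: for all indices $i,j,l$, $a_i$ equals the interpretation of a constant $c$ iff $b_i$ equals the interpretation of $c$; $a_i=a_j$ iff $b_i=b_j$; and $a_i=a_j\cdot a_l$ iff $b_i=b_j\cdot b_l$. We write $w\equiv_k v$ if Duplicator has a winning strategy in the $k$-round game, i.e. a strategy guaranteeing a win against every play of Spoiler. *)

From mathcomp Require Import all_boot.
Set Implicit Arguments. Unset Strict Implicit. Unset Printing Implicit Defensive.

Section EFGame.
Variable Sigma : finType.

(* Elements of A_w: None = bottom, Some u = the word u (meaningful when u is a factor of w). *)
Definition elt := option (seq Sigma).

Definition in_univ (w : seq Sigma) (x : elt) : bool :=
  match x with None => true | Some u => infix u w end.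

Definition concatR (x y z : elt) : bool :=
  match x, y, z with
  | Some x', Some y', Some z' => x' == y' ++ z'
  | _, _, _ => false
  end.

(* Interpretations of all constants: first ε, then each letter a of Sigma
   (interpreted as the word [a] if a occurs in w, else ⊥). *)
Definition consts (w : seq Sigma) : seq elt :=
  Some [::] :: [seq (if a \in w then Some [:: a] else None) | a <- enum Sigma].

(* Partial isomorphism between (a_1..a_n, c^{A_w}) and (b_1..b_n, c^{A_v}):
   over all indices of the extended tuples, equality and R_∘ are preserved
   and reflected. *)
Definition partial_iso (w v : seq Sigma) (p : seq (elt * elt)) : Prop :=
  let A := map fst p ++ consts w in
  let B := map snd p ++ consts v in
  forall i j l, i < size A -> j < size A -> l < size A ->
    ((nth None A i == nth None A j) = (nth None B i == nth None B j)) /\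
    (concatR (nth None A i) (nth None A j) (nth None A l) =
     concatR (nth None B i) (nth None B j) (nth None B l)).

(* A Duplicator strategy: given the history of previous rounds (pairs (a_i,b_i)),
   the structure Spoiler chose (true = A_w, false = A_v) and Spoiler's element,
   return Duplicator's answer in the other structure. *)
Definition dstrategy := seq (elt * elt) -> bool -> elt -> elt.

(* A sequence of Spoiler moves (structure, element). Since Duplicator's strategy
   is deterministic, adaptive Spoiler play amounts to such a sequence. *)
Fixpoint play_from (sigma : dstrategy) (hist : seq (elt * elt))
    (s : seq (bool * elt)) : seq (elt * elt) :=
  match s with
  | [::] => hist
  | (true, x) :: s' => play_from sigma (rcons hist (x, sigma hist true x)) s'
  | (false, y) :: s' => play_from sigma (rcons hist (sigma hist false y, y)) s'
  end.

Definition play (sigma : dstrategy) (s : seq (bool * elt)) := play_from sigma [::] s.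

Definition legal_spoiler (w v : seq Sigma) (s : seq (bool * elt)) : bool :=
  all (fun m : bool * elt => if m.1 then in_univ w m.2 else in_univ v m.2) s.

Definition winning (w v : seq Sigma) (k : nat) (sigma : dstrategy) : Prop :=
  forall s : seq (bool * elt), size s = k -> legal_spoiler w v s ->
    all (fun p : elt * elt => in_univ w p.1 && in_univ v p.2) (play sigma s) /\
    partial_iso w v (play sigma s).

Definition ef_equiv (k : nat) (w v : seq Sigma) : Prop :=
  exists sigma : dstrategy, winning w v k sigma.

End EFGame.

From mathcomp Require Import all_boot.
From mathcomp Require Import zify.

(* Duplicator must copy short words.  Write a_i, b_i for the elements chosen
   in round i+1 of a play where Duplicator follows a winning strategy of the
   k-round game on A_w and A_v.  If a_i is a factor u of w with i + |u| < k,
   then b_i = a_i.  The proof is by induction on u: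
   - u = ε: a_i equals the constant ε, hence so does b_i;
   - u = u'x: Spoiler may replace all later moves, playing u' in A_w in the
     next round j = i+1 (legal since j + |u'| < k).  By induction Duplicator
     answers u' as well; as a_i = a_j · x with x a constant of A_w, the
     partial isomorphism forces b_i = b_j · x = u'x.
   Replacing later moves keeps the earlier rounds, as the strategy is
   deterministic.  The case where b_i is a short factor of v follows by
   exchanging the two structures, which preserves winning strategies. *)

Section Plays.
Context {Sigma : finType}.
Implicit Types (sigma : dstrategy Sigma) (h : seq (elt Sigma * elt Sigma))
  (s : seq (bool * elt Sigma)).

Lemma play_from_cat sigma h s1 s2 :
  play_from sigma h (s1 ++ s2) = play_from sigma (play_from sigma h s1) s2.
Proof. by elim: s1 h => [|[[] x] s1 IH] h //=. Qed.

Lemma play_from_extends sigma h s : exists t, play_from sigma h s = h ++ t.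
Proof.
elim: s h => [|[[] x] s IH] h /=; first by exists [::]; rewrite cats0.
- by have [t ->] := IH (rcons h (x, sigma h true x)); rewrite -cats1 -catA; eexists.
- by have [t ->] := IH (rcons h (sigma h false x, x)); rewrite -cats1 -catA; eexists.
Qed.

Lemma size_play_from sigma h s : size (play_from sigma h s) = size h + size s.
Proof.
by elim: s h => [|[[] x] s IH] h /=; rewrite ?addn0 // IH size_rcons addSnnS.
Qed.

Lemma size_play sigma s : size (play sigma s) = size s.
Proof. exact: size_play_from. Qed.

Lemma nth_play_cat sigma s1 s2 i : i < size s1 ->
  nth (None, None) (play sigma (s1 ++ s2)) i = nth (None, None) (play sigma s1) i.
Proof.
move=> lt_i_s1; rewrite /play play_from_cat.
have [t ->] := play_from_extends sigma (play_from sigma [::] s1) s2.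
by rewrite nth_cat size_play_from lt_i_s1.
Qed.

Lemma nth_play_spoiler sigma s1 x s2 :
  (nth (None, None) (play sigma (s1 ++ (true, x) :: s2)) (size s1)).1 = x.
Proof.
rewrite /play play_from_cat /=.
set h := rcons _ _; have [t ->] := play_from_extends sigma h s2.
by rewrite nth_cat /h size_rcons size_play_from ltnSn nth_rcons size_play_from ltnn eqxx.
Qed.

End Plays.

Section Positions.
Context {Sigma : finType}.
Implicit Types (w v u : seq Sigma) (p : seq (elt Sigma * elt Sigma)).

(* partial_iso compares the tuples (side_1, ..., side_n, ε, letters) where
   side is fst (for A_w) or snd (for A_v); these lemmas read its entries. *)
Section Tuple.
Variables (side : elt Sigma * elt Sigma -> elt Sigma) (w : seq Sigma)
  (p : seq (elt Sigma * elt Sigma)).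
Let tuple := map side p ++ consts w.

Lemma size_tuple : size tuple = size p + (#|Sigma|).+1.
Proof. by rewrite size_cat size_map /= size_map cardE. Qed.

Lemma nth_tuple_round i : i < size p -> nth None tuple i = side (nth (None, None) p i).
Proof. by move=> lt_i_p; rewrite nth_cat size_map lt_i_p (nth_map (None, None)). Qed.

Lemma nth_tuple_eps : nth None tuple (size p) = Some [::].
Proof. by rewrite nth_cat size_map ltnn subnn. Qed.

Lemma nth_tuple_letter x :
  nth None tuple (size p + (index x (enum Sigma)).+1) =
  if x \in w then Some [:: x] else None.
Proof.
rewrite nth_cat size_map ltnNge leq_addr /= addKn /=.
by rewrite (nth_map x) ?index_mem ?mem_enum // nth_index ?mem_enum.
Qed.

End Tuple.

Lemma partial_iso_eps w v p i : partial_iso w v p -> i < size p ->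
  (nth (None, None) p i).1 = Some [::] -> (nth (None, None) p i).2 = Some [::].
Proof.
move=> iso lt_i_p a_eps.
have lt_p : size p < size (map fst p ++ consts w) by rewrite size_tuple addnS ltnS leq_addr.
have [eq_iso _] := iso i (size p) 0 (ltn_trans lt_i_p lt_p) lt_p (leq_ltn_trans (leq0n _) lt_p).
move: eq_iso; rewrite !nth_tuple_eps !nth_tuple_round // a_eps eqxx.
by move=> /esym/eqP.
Qed.

Lemma partial_iso_rcons w v p i j u x : partial_iso w v p ->
  i < size p -> j < size p -> x \in w ->
  (nth (None, None) p i).1 = Some (rcons u x) ->
  (nth (None, None) p j).1 = Some u -> (nth (None, None) p j).2 = Some u ->
  (nth (None, None) p i).2 = Some (rcons u x).
Proof.
move=> iso lt_i_p lt_j_p x_w a_i a_j b_j.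
set l := size p + (index x (enum Sigma)).+1.
have lt_l : l < size (map fst p ++ consts w).
  by rewrite size_tuple ltn_add2l ltnS cardE index_mem mem_enum.
have lt_p : size p < size (map fst p ++ consts w) by rewrite size_tuple addnS ltnS leq_addr.
have [_ concat_iso] := iso i j l (ltn_trans lt_i_p lt_p) (ltn_trans lt_j_p lt_p) lt_l.
move: concat_iso; rewrite !nth_tuple_letter !nth_tuple_round // a_i a_j b_j x_w /=.
rewrite -cats1 eqxx; case: (nth _ p i).2 => [b_i|] //; case: (x \in v) => //=.
by move=> /esym/eqP ->.
Qed.

End Positions.

Section Symmetry.
Context {Sigma : finType}.
Implicit Types (w v : seq Sigma) (sigma : dstrategy Sigma)
  (p h : seq (elt Sigma * elt Sigma)) (s : seq (bool * elt Sigma)).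

Definition swap_round (a : elt Sigma * elt Sigma) := (a.2, a.1).
Definition flip_move (m : bool * elt Sigma) := (~~ m.1, m.2).
Definition mirror sigma : dstrategy Sigma :=
  fun h b x => sigma (map swap_round h) (~~ b) x.

Lemma swap_roundK : involutive swap_round.
Proof. by case. Qed.

Lemma flip_moveK : involutive flip_move.
Proof. by case=> b x; rewrite /flip_move negbK. Qed.

Lemma play_from_mirror sigma h s :
  play_from (mirror sigma) h s =
  map swap_round (play_from sigma (map swap_round h) (map flip_move s)).
Proof.
elim: s h => [|[[] x] s IH] h /=.
- by rewrite (mapK swap_roundK).
all: by rewrite IH map_rcons.
Qed.

Lemma play_mirror sigma s :
  play (mirror sigma) s = map swap_round (play sigma (map flip_move s)).
Proof. exact: play_from_mirror. Qed.

Lemma partial_iso_mirror w v p :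
  partial_iso w v p -> partial_iso v w (map swap_round p).
Proof.
move=> iso.
have fst_swap : map fst (map swap_round p) = map snd p by rewrite -map_comp.
have snd_swap : map snd (map swap_round p) = map fst p by rewrite -map_comp.
rewrite /partial_iso fst_swap snd_swap => i j l.
have -> : size (map snd p ++ consts v) = size (map fst p ++ consts w).
  by rewrite !size_tuple.
by move=> lt_i lt_j lt_l; have [-> ->] := iso i j l lt_i lt_j lt_l.
Qed.

Lemma legal_spoiler_flip {w v s} :
  legal_spoiler w v s -> legal_spoiler v w (map flip_move s).
Proof. by rewrite /legal_spoiler all_map; apply: sub_all => -[[] x]. Qed.

Lemma nth_play_mirror sigma s i :
  nth (None, None) (play (mirror sigma) (map flip_move s)) i =
  swap_round (nth (None, None) (play sigma s) i).
Proof.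
rewrite play_mirror (mapK flip_moveK).
have [lt_i | ge_i] := ltnP i (size (play sigma s)).
  by rewrite (nth_map (None, None)).
by rewrite !nth_default ?size_map.
Qed.

Lemma winning_mirror {w v k sigma} :
  winning w v k sigma -> winning v w k (mirror sigma).
Proof.
move=> win s size_s legal_s.
have [univ iso] := win (map flip_move s) (etrans (size_map _ _) size_s)
  (legal_spoiler_flip legal_s).
rewrite play_mirror; split; last exact: partial_iso_mirror.
by rewrite all_map; apply: sub_all univ => -[a b] /= /andP[-> ->].
Qed.

End Symmetry.

Section Copying.
Context {Sigma : finType}.
Context {w v : seq Sigma} {k : nat} {sigma : dstrategy Sigma}.
Hypothesis win : winning w v k sigma.
Implicit Types (u : seq Sigma) (s : seq (bool * elt Sigma)).

Lemma deviate s j u : size s = k -> legal_spoiler w v s -> j < k -> infix u w ->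
  exists s', [/\ size s' = k, legal_spoiler w v s',
    forall i, i < j -> nth (None, None) (play sigma s') i = nth (None, None) (play sigma s) i
    & (nth (None, None) (play sigma s') j).1 = Some u].
Proof.
move=> size_s legal_s lt_j_k u_w.
have size_take : size (take j s) = j by rewrite size_takel // size_s ltnW.
exists (take j s ++ (true, Some u) :: nseq (k - j.+1) (true, None)); split.
- by rewrite size_cat size_take /= size_nseq; lia.
- move: legal_s; rewrite /legal_spoiler -{1}(cat_take_drop j s) !all_cat.
  by case/andP=> -> _ /=; rewrite u_w all_nseq orbT.
- by move=> i lt_i_j; rewrite -{2}(cat_take_drop j s) !nth_play_cat ?size_take.
- have := nth_play_spoiler sigma (take j s) (Some u) (nseq (k - j.+1) (true, None)).
  by rewrite size_take.
Qed.

Lemma copy_short_factor u : forall s i, size s = k -> legal_spoiler w v s ->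
  i + size u < k -> infix u w ->
  (nth (None, None) (play sigma s) i).1 = Some u ->
  (nth (None, None) (play sigma s) i).2 = Some u.
Proof.
elim/last_ind: u => [|u x IH] s i size_s legal_s ux_short ux_w a_i.
  have [_ iso] := win s size_s legal_s.
  by apply: partial_iso_eps iso _ a_i; rewrite size_play size_s -(addn0 i).
have x_w : x \in w by apply: (mem_infix ux_w); rewrite mem_rcons mem_head.
have u_w : infix u w := infix_trans (infix_rcons u x) ux_w.
have u_short : i.+1 + size u < k by move: ux_short; rewrite size_rcons addnS addSn.
have lt_j_k : i.+1 < k by apply: leq_ltn_trans u_short; rewrite leq_addr.
have [s' [size_s' legal_s' same_prefix a_j]] := deviate s i.+1 u size_s legal_s lt_j_k u_w.
have b_j := IH s' i.+1 size_s' legal_s' u_short u_w a_j.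
have [_ iso] := win s' size_s' legal_s'.
rewrite -(same_prefix i (ltnSn i)) in a_i *.
by apply: partial_iso_rcons iso _ _ x_w a_i a_j b_j; rewrite size_play size_s' // ltnW.
Qed.

End Copying.

Theorem lemma4p2 (Sigma : finType) (w v : seq Sigma) (k : nat)
    (sigma : dstrategy Sigma) :
  ef_equiv k w v -> winning w v k sigma ->
  forall s : seq (bool * elt Sigma), size s = k -> legal_spoiler w v s ->
  forall r : nat, 1 <= r <= k ->
  let a_r := (nth (None, None) (play sigma s) r.-1).1 in
  let b_r := (nth (None, None) (play sigma s) r.-1).2 in
  ((exists u, a_r = Some u /\ infix u w /\ r + size u - 1 < k) \/
   (exists u, b_r = Some u /\ infix u v /\ r + size u - 1 < k)) ->
  a_r = b_r.
Proof.
move=> _ win s size_s legal_s r /andP[r_pos _] a_r b_r.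
rewrite {}/a_r {}/b_r.
have short u : r + size u - 1 < k -> r.-1 + size u < k by lia.
case=> [[u [a_u [u_w /short u_short]]] | [u [b_u [u_v /short u_short]]]].
- by rewrite a_u (copy_short_factor win _ _ _ size_s legal_s u_short u_w a_u).
(* The A_v-side is the A_w-side of the mirrored game on (A_v, A_w). *)
- have mirror_size : size (map flip_move s) = k by rewrite size_map.
  have := copy_short_factor (winning_mirror win) _ _ _ mirror_size
    (legal_spoiler_flip legal_s) u_short u_v.
  by rewrite !nth_play_mirror /= b_u => /(_ erefl).
Qed.
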